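(* In CC, if $\Gamma\vdash M:A$, then $\mathrm{FV}(M)\vdash M:A$.
   Context: CC: expressions $x\mid U_i\mid\Pi x{:}A.B\mid L\,M\mid\lambda x{:}A.M$; contexts $\Gamma::=\cdot\mid\Gamma,x{:}A$; reduction $(\lambda x{:}A.N)\,M\triangleright N[M/x]$; equivalence $\equiv$ is joinability under $\triangleright^*$ plus $\eta$ (if $L\triangleright^*\lambda x{:}A.L'$, $M\triangleright^*M'$, $L'\equiv M'\,x$ then $L\equiv M$, and symmetrically). Typing and context formation (mutual): $\vdash\cdot$; $\vdash\Gamma,\Gamma\vdash A:U_i\Rightarrow\vdash\Gamma,x{:}A$; variables from a well-formed context; $U_i:U_{i+1}$; $\Pi x{:}A.B:U_{\max(i,j)}$ if $A:U_i$ and $B:U_j$ under $x{:}A$; $M\,N:B[N/x]$ if $M:\Pi x{:}A.B$, $N:A$; $\lambda x{:}A.M:\Pi x{:}A.B$ if $M:B$ under $x{:}A$; conversion to a type $B:U_i$ with $A\equiv B$. $\mathrm{FV}(M)$ takes the derivation of $\Gamma\vdash M:A$ as implicit argument: let $x_1,\dots,x_n$ be the unbound (free) variables of $M$ and of $A$, with $\Gamma\vdash x_k:A_k$; then $\mathrm{FV}(M)=\mathrm{FV}(A_1)\cup\dots\cup\mathrm{FV}(A_n)\cup(x_1{:}A_1,\dots,x_n{:}A_n)$, where the union $\Gamma_1\cup\Gamma_2$ of contexts is $\Gamma_1$ appended with the entries $x{:}A$ that appear only in $\Gamma_2$, preserving their order. *)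

(* Calculus of Constructions (CC) with a cumulative-free
   universe hierarchy U_i, locally nameless presentation:
   free variables are names (atoms = nat), bound variables are de Bruijn
   indices.  Reduction / equivalence are the standard de Bruijn ones on raw
   terms (so they make sense under binders with no side conditions). *)
From Stdlib Require Import List Arith PeanoNat.
Import ListNotations.

Definition atom := nat.

Inductive term : Type :=
  | bvar (n : nat)
  | fvar (x : atom)
  | univ (i : nat)
  | pi   (A B : term)
  | app  (L M : term)
  | lam  (A M : term).

Definition term_eq_dec : forall s t : term, {s = t} + {s <> t}.
Proof. decide equality; apply Nat.eq_dec. Defined.

Fixpoint lift (d c : nat) (t : term) : term :=
  match t with
  | bvar n => if c <=? n then bvar (n + d) else bvar n
  | fvar x => fvar x
  | univ i => univ i
  | pi A B => pi (lift d c A) (lift d (S c) B)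
  | app L M => app (lift d c L) (lift d c M)
  | lam A M => lam (lift d c A) (lift d (S c) M)
  end.

Fixpoint bsubst (k : nat) (u : term) (t : term) : term :=
  match t with
  | bvar n => if n =? k then lift k 0 u
              else if k <? n then bvar (n - 1) else bvar n
  | fvar x => fvar x
  | univ i => univ i
  | pi A B => pi (bsubst k u A) (bsubst (S k) u B)
  | app L M => app (bsubst k u L) (bsubst k u M)
  | lam A M => lam (bsubst k u A) (bsubst (S k) u M)
  end.

(* N[M/x] where x is the variable bound by the enclosing binder of N *)
Definition inst (N M : term) : term := bsubst 0 M N.
Definition open (N : term) (x : atom) : term := inst N (fvar x).

Inductive red1 : term -> term -> Prop :=
  | r_beta A N M : red1 (app (lam A N) M) (inst N M)
  | r_pi1 A A' B : red1 A A' -> red1 (pi A B) (pi A' B)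
  | r_pi2 A B B' : red1 B B' -> red1 (pi A B) (pi A B')
  | r_app1 L L' M : red1 L L' -> red1 (app L M) (app L' M)
  | r_app2 L M M' : red1 M M' -> red1 (app L M) (app L M')
  | r_lam1 A A' M : red1 A A' -> red1 (lam A M) (lam A' M)
  | r_lam2 A M M' : red1 M M' -> red1 (lam A M) (lam A M').

Inductive reds : term -> term -> Prop :=
  | reds_refl t : reds t t
  | reds_step s t u : red1 s t -> reds t u -> reds s u.

Inductive equiv : term -> term -> Prop :=
  | eq_join L M N : reds L N -> reds M N -> equiv L M
  | eq_eta1 L M A L' M' :
      reds L (lam A L') -> reds M M' ->
      equiv L' (app (lift 1 0 M') (bvar 0)) -> equiv L M
  | eq_eta2 L M A M' L' :
      reds L L' -> reds M (lam A M') ->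
      equiv (app (lift 1 0 L') (bvar 0)) M' -> equiv L M.

(* contexts, in left-to-right order: Gamma, x:A  is  Gamma ++ [(x,A)] *)
Definition ctx := list (atom * term).
Definition dom (G : ctx) : list atom := map fst G.

Inductive wf : ctx -> Prop :=
  | wf_nil : wf []
  | wf_ext G x A i :
      wf G -> typing G A (univ i) -> ~ In x (dom G) -> wf (G ++ [(x, A)])
with typing : ctx -> term -> term -> Prop :=
  | t_var G x A : wf G -> In (x, A) G -> typing G (fvar x) A
  | t_univ G i : wf G -> typing G (univ i) (univ (S i))
  | t_pi G A B i j (L : list atom) :
      typing G A (univ i) ->
      (forall x, ~ In x L -> typing (G ++ [(x, A)]) (open B x) (univ j)) ->
      typing G (pi A B) (univ (Nat.max i j))
  | t_app G M N A B :
      typing G M (pi A B) -> typing G N A -> typing G (app M N) (inst B N)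
  | t_lam G A M B (L : list atom) :
      (forall x, ~ In x L -> typing (G ++ [(x, A)]) (open M x) (open B x)) ->
      typing G (lam A M) (pi A B)
  | t_conv G M A B i :
      typing G M A -> typing G B (univ i) -> equiv A B -> typing G M B.

Fixpoint fv (t : term) : list atom :=
  match t with
  | bvar _ => []
  | fvar x => [x]
  | univ _ => []
  | pi A B => fv A ++ fv B
  | app L M => fv L ++ fv M
  | lam A M => fv A ++ fv M
  end.

Fixpoint undup_aux (seen : list atom) (l : list atom) : list atom :=
  match l with
  | [] => []
  | x :: l' => if in_dec Nat.eq_dec x seen then undup_aux seen l'
               else x :: undup_aux (x :: seen) l'
  end.
Definition undup (l : list atom) : list atom := undup_aux [] l.

Definition entry_eq_dec : forall e f : atom * term, {e = f} + {e <> f}.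
Proof. decide equality; [apply term_eq_dec | apply Nat.eq_dec]. Defined.

Definition cunion (G1 G2 : ctx) : ctx :=
  G1 ++ filter (fun e => if in_dec entry_eq_dec e G1 then false else true) G2.

Fixpoint lookup (x : atom) (G : ctx) : option term :=
  match G with
  | [] => None
  | (y, A) :: G' => if Nat.eqb x y then Some A else lookup x G'
  end.

Definition entries (G : ctx) (xs : list atom) : ctx :=
  flat_map (fun x => match lookup x G with Some A => [(x, A)] | None => [] end) xs.

(* fvctx n G xs = FV(A_1) u ... u FV(A_n) u (x_1:A_1,...,x_n:A_n),
   computed with fuel n (length G suffices, since in a well-formed
   context the type of a variable only mentions earlier variables). *)
Fixpoint fvctx (n : nat) (G : ctx) (xs : list atom) : ctx :=
  match n with
  | 0 => []
  | S n' =>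
      let es := entries G xs in
      cunion (fold_left cunion (map (fun e => fvctx n' G (undup (fv (snd e)))) es) [])
             es
  end.

(* FV(M) relative to the derivation of G |- M : A *)
Definition FV (G : ctx) (M A : term) : ctx :=
  fvctx (length G) G (undup (fv M ++ fv A)).

(* FV(M) is a sub-context of G in which every entry comes after the variables of its type,
   so it is well formed, and the theorem becomes an instance of strengthening: deleting
   context entries that occur neither in M nor in A preserves G |- M : A.  Strengthening
   is proved up to a reduct of the type, which needs subject reduction and, for the
   conversion rule, that equivalent types are joinable.  Since eta with domain annotations
   breaks confluence of beta-eta, this is derived from beta-confluence alone: a chain of
   equivalence and joinability steps between two terms that never reduce to an abstraction
   collapses to a single joinability, by induction on the number of eta steps. *)

From Stdlib Require Import List PeanoNat Wf_nat Lia Classical.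
Import ListNotations.

(** * Locally closed terms and substitution *)

Fixpoint lc_at (k : nat) (t : term) : Prop :=
  match t with
  | bvar n => n < k
  | fvar _ | univ _ => True
  | pi A B | lam A B => lc_at k A /\ lc_at (S k) B
  | app L M => lc_at k L /\ lc_at k M
  end.

Fixpoint fsubst (x : atom) (u : term) (t : term) : term :=
  match t with
  | bvar n => bvar n
  | fvar y => if Nat.eqb y x then u else fvar y
  | univ i => univ i
  | pi A B => pi (fsubst x u A) (fsubst x u B)
  | app L M => app (fsubst x u L) (fsubst x u M)
  | lam A M => lam (fsubst x u A) (fsubst x u M)
  end.

Ltac nat_cases := repeat match goal with
  | |- context [?a <=? ?b] => destruct (Nat.leb_spec a b)
  | |- context [?a =? ?b] => destruct (Nat.eqb_spec a b)
  | |- context [?a <? ?b] => destruct (Nat.ltb_spec a b)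
  end.
Ltac index_arith :=
  repeat (cbn [lift bsubst fsubst fv lc_at] in *; nat_cases); try (f_equal; lia); try lia.

Lemma lc_at_mono t k k' : k <= k' -> lc_at k t -> lc_at k' t.
Proof.
  revert k k'; induction t; simpl; intros k k' Hk Ht; try lia; auto;
    destruct Ht; split; eauto with arith.
Qed.

Lemma lc_at_0 t k : lc_at 0 t -> lc_at k t.
Proof. apply lc_at_mono; lia. Qed.

Lemma lift_lc t d c : lc_at c t -> lift d c t = t.
Proof. revert d c; induction t; simpl; intros; index_arith; f_equal; intuition. Qed.

Lemma bsubst_lc t k u : lc_at k t -> bsubst k u t = t.
Proof. revert k u; induction t; simpl; intros; index_arith; f_equal; intuition. Qed.

Lemma lift_lift t d d' c c' : c <= c' -> c' <= c + d ->
  lift d' c' (lift d c t) = lift (d' + d) c t.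
Proof. revert d d' c c'; induction t; intros; index_arith; f_equal; auto; apply IHt2; lia. Qed.

Lemma lift_lift_comm t d d' c c' : c' <= c ->
  lift d (c + d') (lift d' c' t) = lift d' c' (lift d c t).
Proof.
  revert d d' c c'; induction t; intros; index_arith; f_equal; auto;
    replace (S (c + d')) with (S c + d') by lia; apply IHt2; lia.
Qed.

Lemma bsubst_lift_cancel t u k d c : c <= k -> k <= c + d ->
  bsubst k u (lift (S d) c t) = lift d c t.
Proof. revert u k d c; induction t; intros; index_arith; f_equal; auto; apply IHt2; lia. Qed.

Lemma lift_bsubst t u d k c : k <= c ->
  lift d c (bsubst k u t) = bsubst k (lift d (c - k) u) (lift d (S c) t).
Proof.
  revert u d k c; induction t; intros u d k c Hk; cbn [bsubst lift];
    try (f_equal; auto; rewrite IHt2 by lia; f_equal).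
  destruct (Nat.eqb_spec n k); [subst | index_arith].
  index_arith. replace c with ((c - k) + k) at 1 by lia. apply lift_lift_comm; lia.
Qed.

Lemma bsubst_lift_comm t u k d c : c <= k ->
  bsubst (k + d) u (lift d c t) = lift d c (bsubst k u t).
Proof.
  revert u k d c; induction t; intros u k d c Hc; cbn [bsubst lift]; f_equal; auto;
    try (replace (S (k + d)) with (S k + d) by lia; apply IHt2; lia).
  destruct (Nat.leb_spec c n); simpl; [|index_arith].
  destruct (Nat.eqb_spec n k); [|index_arith].
  subst. rewrite Nat.eqb_refl, lift_lift by lia. f_equal; lia.
Qed.

Lemma bsubst_bsubst t u v k k' : k' <= k ->
  bsubst k u (bsubst k' v t) = bsubst k' (bsubst (k - k') u v) (bsubst (S k) u t).
Proof.
  revert u v k k'; induction t; intros u v k k' Hk; cbn [bsubst];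
    try (f_equal; auto; rewrite IHt2 by lia; f_equal).
  destruct (Nat.eqb_spec n k').
  - subst; index_arith. replace k with ((k - k') + k') at 1 by lia.
    rewrite bsubst_lift_comm by lia. reflexivity.
  - index_arith; subst; rewrite bsubst_lift_cancel by lia; f_equal; lia.
Qed.

Lemma bsubst_bvar_lift W k : bsubst k (bvar 0) (lift 1 (S k) W) = W.
Proof. revert k; induction W; intros; index_arith; simpl; f_equal; auto. Qed.

Lemma lift_inj t1 t2 d c : lift d c t1 = lift d c t2 -> t1 = t2.
Proof.
  revert t2 d c; induction t1; destruct t2; intros d c E; cbn [lift] in E; revert E;
    nat_cases; intro E; try discriminate; inversion E; subst; f_equal; eauto; lia.
Qed.

Lemma lc_bsubst_inv t k u : lc_at k (bsubst k u t) -> lc_at (S k) t.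
Proof.
  revert k u; induction t; simpl; intros k u H; try tauto;
    [revert H; index_arith | destruct H; split; eauto ..].
Qed.

Lemma lc_bsubst t k u : lc_at (S k) t -> lc_at 0 u -> lc_at k (bsubst k u t).
Proof.
  revert k u; induction t; simpl; intros k u Ht Hu; try tauto;
    [| destruct Ht; split; eauto ..].
  index_arith. rewrite lift_lc by auto using lc_at_0. auto using lc_at_0.
Qed.

Lemma fsubst_lift t x u d c : lc_at 0 u ->
  fsubst x u (lift d c t) = lift d c (fsubst x u t).
Proof.
  revert d c; induction t; simpl; intros; try (f_equal; auto; fail).
  - index_arith.
  - destruct (Nat.eqb_spec x0 x); auto. rewrite lift_lc; auto using lc_at_0.
Qed.

Lemma fsubst_bsubst t x u v k : lc_at 0 u ->
  fsubst x u (bsubst k v t) = bsubst k (fsubst x u v) (fsubst x u t).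
Proof.
  revert k; induction t; simpl; intros; try (f_equal; auto; fail).
  - index_arith. apply fsubst_lift; auto.
  - destruct (Nat.eqb_spec x0 x); auto. rewrite bsubst_lc; auto using lc_at_0.
Qed.

Lemma fsubst_fresh t x u : ~ In x (fv t) -> fsubst x u t = t.
Proof.
  induction t; simpl; intros Hx; rewrite ?in_app_iff in Hx; f_equal; auto.
  destruct (Nat.eqb_spec x0 x); subst; tauto.
Qed.

Lemma fsubst_id t x : fsubst x (fvar x) t = t.
Proof. induction t; simpl; f_equal; auto. destruct (Nat.eqb_spec x0 x); congruence. Qed.

Lemma fsubst_bsubst_fvar t x u k : lc_at 0 u -> ~ In x (fv t) ->
  fsubst x u (bsubst k (fvar x) t) = bsubst k u t.
Proof.
  revert k; induction t; simpl; intros k Hu Hx; rewrite ?in_app_iff in Hx; f_equal; auto.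
  - index_arith; simpl; rewrite ?Nat.eqb_refl; auto.
    symmetry; apply lift_lc; auto using lc_at_0.
  - destruct (Nat.eqb_spec x0 x); subst; tauto.
Qed.

Lemma fsubst_rename_inv t x z : ~ In z (fv t) ->
  fsubst z (fvar x) (fsubst x (fvar z) t) = t.
Proof.
  induction t; simpl; intros Hz; rewrite ?in_app_iff in Hz; f_equal; auto.
  destruct (Nat.eqb_spec x0 x); subst; simpl.
  - rewrite Nat.eqb_refl; auto.
  - destruct (Nat.eqb_spec x0 z); subst; tauto.
Qed.

Lemma fv_lift t d c : fv (lift d c t) = fv t.
Proof. revert d c; induction t; simpl; intros; index_arith; f_equal; auto. Qed.

Lemma fv_bsubst_inv t k u z : In z (fv (bsubst k u t)) -> In z (fv u) \/ In z (fv t).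
Proof.
  revert k; induction t; simpl; intros k H; auto.
  1: revert H; index_arith; intro Hz; rewrite ?fv_lift in Hz; auto.
  all: rewrite in_app_iff in *; destruct H as [H|H];
    [destruct (IHt1 _ H) | destruct (IHt2 _ H)]; tauto.
Qed.

Lemma fv_bsubst_intro t k u z : In z (fv t) -> In z (fv (bsubst k u t)).
Proof. revert k; induction t; simpl; intros k H; try tauto; rewrite in_app_iff in *; intuition. Qed.

(** * Beta reduction and confluence *)

#[export] Hint Constructors reds red1 : core.

Lemma reds_trans s t u : reds s t -> reds t u -> reds s u.
Proof. induction 1; eauto. Qed.

Lemma red1_reds s t : red1 s t -> reds s t.
Proof. eauto. Qed.

Lemma reds_pi A A' B B' : reds A A' -> reds B B' -> reds (pi A B) (pi A' B').
Proof. induction 1; [induction 1|]; eauto. Qed.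

Lemma reds_app A A' B B' : reds A A' -> reds B B' -> reds (app A B) (app A' B').
Proof. induction 1; [induction 1|]; eauto. Qed.

Lemma reds_lam A A' B B' : reds A A' -> reds B B' -> reds (lam A B) (lam A' B').
Proof. induction 1; [induction 1|]; eauto. Qed.

Lemma red1_lift t t' d c : red1 t t' -> red1 (lift d c t) (lift d c t').
Proof.
  intros H; revert d c; induction H; intros; simpl; auto.
  unfold inst. rewrite lift_bsubst, Nat.sub_0_r by lia. constructor.
Qed.

Lemma reds_lift t t' d c : reds t t' -> reds (lift d c t) (lift d c t').
Proof. induction 1; eauto using red1_lift. Qed.

Lemma red1_bsubst t t' k u : red1 t t' -> red1 (bsubst k u t) (bsubst k u t').
Proof.
  intros H; revert k; induction H; intros; simpl; auto.
  unfold inst. rewrite bsubst_bsubst, Nat.sub_0_r by lia. constructor.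
Qed.

Lemma reds_bsubst t t' k u : reds t t' -> reds (bsubst k u t) (bsubst k u t').
Proof. induction 1; eauto using red1_bsubst. Qed.

Lemma reds_bsubst_arg t k u u' : reds u u' -> reds (bsubst k u t) (bsubst k u' t).
Proof.
  revert k; induction t; intros k Hu; simpl; auto using reds_pi, reds_app, reds_lam.
  destruct (n =? k); [apply reds_lift; auto | destruct (k <? n); auto].
Qed.

Lemma red1_fsubst t t' x u : lc_at 0 u -> red1 t t' -> red1 (fsubst x u t) (fsubst x u t').
Proof.
  intros Hu H; induction H; simpl; auto.
  unfold inst. rewrite fsubst_bsubst by auto. constructor.
Qed.

Lemma reds_fsubst t t' x u : lc_at 0 u -> reds t t' -> reds (fsubst x u t) (fsubst x u t').
Proof. induction 2; eauto using red1_fsubst. Qed.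

Lemma red1_fv t t' z : red1 t t' -> In z (fv t') -> In z (fv t).
Proof.
  induction 1; simpl; intros Hz; rewrite ?in_app_iff in *; try tauto.
  apply fv_bsubst_inv in Hz. tauto.
Qed.

Lemma reds_fv t t' z : reds t t' -> In z (fv t') -> In z (fv t).
Proof. induction 1; eauto using red1_fv. Qed.

Inductive par : term -> term -> Prop :=
  | par_bvar n : par (bvar n) (bvar n)
  | par_fvar x : par (fvar x) (fvar x)
  | par_univ i : par (univ i) (univ i)
  | par_pi A A' B B' : par A A' -> par B B' -> par (pi A B) (pi A' B')
  | par_app A A' B B' : par A A' -> par B B' -> par (app A B) (app A' B')
  | par_lam A A' B B' : par A A' -> par B B' -> par (lam A B) (lam A' B')
  | par_beta A N N' M M' : par N N' -> par M M' -> par (app (lam A N) M) (inst N' M').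
#[local] Hint Constructors par : core.

Lemma par_refl t : par t t.
Proof. induction t; auto. Qed.
#[local] Hint Resolve par_refl : core.

Lemma red1_par t t' : red1 t t' -> par t t'.
Proof. induction 1; auto. Qed.

Lemma par_reds t t' : par t t' -> reds t t'.
Proof.
  induction 1; auto using reds_pi, reds_app, reds_lam.
  eapply reds_trans; [apply reds_app; [apply reds_lam|]|]; eauto.
Qed.

Lemma par_lift t t' d c : par t t' -> par (lift d c t) (lift d c t').
Proof.
  intros H; revert d c; induction H; intros; simpl; auto.
  unfold inst. rewrite lift_bsubst, Nat.sub_0_r by lia. apply par_beta; auto.
Qed.

Lemma par_bsubst t t' u u' k : par t t' -> par u u' -> par (bsubst k u t) (bsubst k u' t').
Proof.
  intros H; revert u u' k; induction H; intros; simpl; auto.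
  - destruct (_ =? k); [apply par_lift; auto | destruct (k <? _); auto].
  - unfold inst. rewrite bsubst_bsubst, Nat.sub_0_r by lia. apply par_beta; auto.
Qed.

(* Takahashi's complete development. *)
Fixpoint dev (t : term) : term :=
  match t with
  | app (lam A N) M => inst (dev N) (dev M)
  | app L M => app (dev L) (dev M)
  | pi A B => pi (dev A) (dev B)
  | lam A M => lam (dev A) (dev M)
  | t => t
  end.

Lemma par_dev t t' : par t t' -> par t' (dev t).
Proof.
  induction 1; simpl; auto.
  - destruct A; auto. inversion H; subst. inversion IHpar1; subst. auto.
  - unfold inst. apply par_bsubst; auto.
Qed.

Lemma reds_par_strip t t2 t1 : reds t t2 -> par t t1 -> exists t3, reds t1 t3 /\ par t2 t3.
Proof.
  intros H; revert t1; induction H as [|s t u Hst _ IH]; intros t1 Ht1; eauto.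
  destruct (IH (dev s)) as [t3 [? ?]]; [apply par_dev, red1_par; auto|].
  exists t3. split; auto. eapply reds_trans; [apply par_reds, par_dev|]; eauto.
Qed.

Theorem reds_confluent t t1 t2 : reds t t1 -> reds t t2 -> exists t3, reds t1 t3 /\ reds t2 t3.
Proof.
  intros H; revert t2; induction H as [x|s m u Hsm _ IH]; intros t2 H2; eauto.
  destruct (reds_par_strip _ _ m H2) as [t3 [H3 H4]]; [apply red1_par; auto|].
  destruct (IH t3 H3) as [t4 [? ?]].
  exists t4. split; auto. eapply reds_trans; [apply par_reds|]; eauto.
Qed.

Lemma reds_pi_inv A B X : reds (pi A B) X ->
  exists A' B', X = pi A' B' /\ reds A A' /\ reds B B'.
Proof.
  intros H; remember (pi A B) as P; revert A B HeqP.
  induction H as [|s t u Hst _ IH]; intros A B ->; [eauto 6|].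
  inversion Hst; subst; destruct (IH _ _ eq_refl) as [A2 [B2 [-> [? ?]]]]; eauto 7.
Qed.

Lemma reds_lam_inv A B X : reds (lam A B) X ->
  exists A' B', X = lam A' B' /\ reds A A' /\ reds B B'.
Proof.
  intros H; remember (lam A B) as P; revert A B HeqP.
  induction H as [|s t u Hst _ IH]; intros A B ->; [eauto 6|].
  inversion Hst; subst; destruct (IH _ _ eq_refl) as [A2 [B2 [-> [? ?]]]]; eauto 7.
Qed.

Lemma reds_univ_inv i X : reds (univ i) X -> X = univ i.
Proof. intros H; remember (univ i) as P; induction H; subst; auto. inversion H. Qed.

Lemma reds_app_inv P Q X : reds (app P Q) X ->
  (exists P' Q', X = app P' Q' /\ reds P P' /\ reds Q Q') \/ (exists A N, reds P (lam A N)).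
Proof.
  intros H; remember (app P Q) as T; revert P Q HeqT.
  induction H as [|s t u Hst _ IH]; intros P Q ->; [left; eauto 6|].
  inversion Hst; subst; [right; eauto| |];
    (destruct (IH _ _ eq_refl) as [[P2 [Q2 [-> [? ?]]]]|[A [N ?]]]; [left|right]; eauto 7).
Qed.

Lemma reds_reflect (f : term -> term) :
  (forall t s, red1 (f t) s -> exists t', s = f t' /\ red1 t t') ->
  forall t s, reds (f t) s -> exists t', s = f t' /\ reds t t'.
Proof.
  intros Hf t s H; remember (f t) as T; revert t HeqT.
  induction H as [T|s m u Hsm _ IH]; intros t ->; [eauto|].
  destruct (Hf _ _ Hsm) as [t1 [-> ?]]. destruct (IH t1 eq_refl) as [t2 [-> ?]]. eauto.
Qed.

Lemma red1_lift_inv t d c s : red1 (lift d c t) s -> exists t', s = lift d c t' /\ red1 t t'.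
Proof.
  revert d c s; induction t; intros d c s H; simpl in H.
  - destruct (c <=? n); inversion H.
  - inversion H.
  - inversion H.
  - inversion H; subst.
    + destruct (IHt1 _ _ _ H3) as [t' [-> ?]]. exists (pi t' t2); auto.
    + destruct (IHt2 _ _ _ H3) as [t' [-> ?]]. exists (pi t1 t'); auto.
  - inversion H; subst.
    + destruct t1; simpl in H1; try discriminate; [destruct (c <=? n); discriminate|].
      inversion H1; subst. exists (inst t1_2 t2). unfold inst.
      rewrite lift_bsubst, Nat.sub_0_r by lia. auto.
    + destruct (IHt1 _ _ _ H3) as [t' [-> ?]]. exists (app t' t2); auto.
    + destruct (IHt2 _ _ _ H3) as [t' [-> ?]]. exists (app t1 t'); auto.
  - inversion H; subst.
    + destruct (IHt1 _ _ _ H3) as [t' [-> ?]]. exists (lam t' t2); auto.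
    + destruct (IHt2 _ _ _ H3) as [t' [-> ?]]. exists (lam t1 t'); auto.
Qed.

Lemma reds_lift_inv t d c s : reds (lift d c t) s -> exists t', s = lift d c t' /\ reds t t'.
Proof. apply (reds_reflect (lift d c)). intros; apply red1_lift_inv; auto. Qed.

Lemma red1_bsubst_fvar_inv t k y s : red1 (bsubst k (fvar y) t) s ->
  exists t', s = bsubst k (fvar y) t' /\ red1 t t'.
Proof.
  revert k s; induction t; intros k s H; simpl in H.
  - destruct (n =? k); [|destruct (k <? n)]; inversion H.
  - inversion H.
  - inversion H.
  - inversion H; subst.
    + destruct (IHt1 _ _ H3) as [t' [-> ?]]. exists (pi t' t2); auto.
    + destruct (IHt2 _ _ H3) as [t' [-> ?]]. exists (pi t1 t'); auto.
  - inversion H; subst.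
    + destruct t1; simpl in H1; try discriminate;
        [destruct (n =? k); [|destruct (k <? n)]; discriminate|].
      inversion H1; subst. exists (inst t1_2 t2). unfold inst.
      rewrite (bsubst_bsubst t1_2 (fvar y) t2 k 0), Nat.sub_0_r by lia. auto.
    + destruct (IHt1 _ _ H3) as [t' [-> ?]]. exists (app t' t2); auto.
    + destruct (IHt2 _ _ H3) as [t' [-> ?]]. exists (app t1 t'); auto.
  - inversion H; subst.
    + destruct (IHt1 _ _ H3) as [t' [-> ?]]. exists (lam t' t2); auto.
    + destruct (IHt2 _ _ H3) as [t' [-> ?]]. exists (lam t1 t'); auto.
Qed.

Lemma reds_open_inv t y s : reds (open t y) s -> exists t', s = open t' y /\ reds t t'.
Proof. apply (reds_reflect (fun t => open t y)). intros; apply red1_bsubst_fvar_inv; auto. Qed.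

(** * Joinability, rigid terms and eta *)

Definition joinable (X Y : term) : Prop := exists Z, reds X Z /\ reds Y Z.

Lemma joinable_refl X : joinable X X.
Proof. exists X; auto. Qed.

Lemma joinable_sym X Y : joinable X Y -> joinable Y X.
Proof. intros [Z [? ?]]; exists Z; auto. Qed.

Lemma joinable_trans X Y Z : joinable X Y -> joinable Y Z -> joinable X Z.
Proof.
  intros [A [? HYA]] [B [HYB ?]].
  destruct (reds_confluent _ _ _ HYA HYB) as [C [? ?]].
  exists C; split; eapply reds_trans; eauto.
Qed.

Lemma reds_joinable X Y : reds X Y -> joinable X Y.
Proof. exists Y; auto. Qed.

Lemma joinable_equiv A B : joinable A B -> equiv A B.
Proof. intros [Z [? ?]]; eapply eq_join; eauto. Qed.

Lemma joinable_pi_inv A B A' B' : joinable (pi A B) (pi A' B') -> joinable A A' /\ joinable B B'.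
Proof.
  intros [Z [H1 H2]].
  apply reds_pi_inv in H1 as [A1 [B1 [-> [? ?]]]].
  apply reds_pi_inv in H2 as [A2 [B2 [E [? ?]]]]. inversion E; subst.
  split; [exists A2 | exists B2]; auto.
Qed.

Lemma joinable_lam_bodies Y Y' A W A' W' :
  joinable Y Y' -> reds Y (lam A W) -> reds Y' (lam A' W') -> joinable W W'.
Proof.
  intros HY HW HW'.
  assert (Hlam : joinable (lam A W) (lam A' W')).
  { eapply joinable_trans; [apply joinable_sym, reds_joinable; eauto|].
    eapply joinable_trans; eauto using reds_joinable. }
  destruct Hlam as [Z [H1 H2]].
  apply reds_lam_inv in H1 as [? [W1 [-> [? ?]]]].
  apply reds_lam_inv in H2 as [? [W2 [E [? ?]]]]. inversion E; subst.
  exists W2; auto.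
Qed.

Lemma reds_lam_common Y M A W : reds Y M -> reds Y (lam A W) ->
  exists A' W', reds M (lam A' W') /\ reds W W' /\ reds Y (lam A' W').
Proof.
  intros HM HW. destruct (reds_confluent _ _ _ HM HW) as [Z [? HZ]].
  apply reds_lam_inv in HZ as [A' [W' [-> [? ?]]]].
  exists A', W'. split; [|split]; auto. eapply reds_trans; [eauto | apply reds_lam; auto].
Qed.

Definition rigid (X : term) : Prop := forall A W, ~ reds X (lam A W).

Definition reds_to_lam (X : term) : Prop := exists A W, reds X (lam A W).

Lemma not_rigid_reds_to_lam X : ~ rigid X -> reds_to_lam X.
Proof.
  intros H. apply NNPP. intros Hlam. apply H. intros A W HW. apply Hlam. exists A, W; auto.
Qed.

Lemma rigid_reds X Y : rigid X -> reds X Y -> rigid Y.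
Proof. intros H HY A W HW. apply (H A W). eapply reds_trans; eauto. Qed.

Lemma rigid_joinable X Y : rigid X -> joinable X Y -> rigid Y.
Proof.
  intros H [Z [HXZ HYZ]] A W HW.
  destruct (reds_confluent _ _ _ HYZ HW) as [C [HZC HC]].
  apply reds_lam_inv in HC as [A' [W' [-> _]]].
  apply (H A' W'). eapply reds_trans; eauto.
Qed.

Lemma rigid_pi A B : rigid (pi A B).
Proof. intros A' W H. apply reds_pi_inv in H as [? [? [? _]]]. discriminate. Qed.

Lemma rigid_univ i : rigid (univ i).
Proof. intros A W H. apply reds_univ_inv in H. discriminate. Qed.

Definition eta_body (M : term) : term := app (lift 1 0 M) (bvar 0).

Lemma reds_eta_body M A W : reds M (lam A W) -> reds (eta_body M) W.
Proof.
  intros H. eapply reds_trans; [apply reds_app; [apply reds_lift; eauto | apply reds_refl]|].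
  simpl. apply red1_reds. rewrite <- (bsubst_bvar_lift W 0) at 2. constructor.
Qed.

Lemma eta_body_joinable X Y : joinable X Y -> joinable (eta_body X) (eta_body Y).
Proof.
  intros [Z [? ?]]. exists (eta_body Z). split; apply reds_app; auto using reds_lift.
Qed.

Lemma reds_lift_lam Y A N : reds (lift 1 0 Y) (lam A N) -> reds_to_lam Y.
Proof.
  intros H. apply reds_lift_inv in H as [t [E Ht]].
  destruct t; simpl in E; try discriminate. exists t1, t2; auto.
Qed.

Lemma rigid_eta_body X : rigid X -> rigid (eta_body X).
Proof.
  intros HX A W H. apply reds_app_inv in H as [[? [? [? _]]] | [A' [N H]]]; [discriminate|].
  apply reds_lift_lam in H as [? [? ?]]. eapply HX; eauto.
Qed.

Lemma joinable_eta_body_inv X Y : rigid X -> rigid Y ->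
  joinable (eta_body X) (eta_body Y) -> joinable X Y.
Proof.
  intros HX HY [Z [H1 H2]].
  apply reds_app_inv in H1 as [[P1 [Q1 [-> [H1 _]]]] | [A [N H1]]].
  2: { apply reds_lift_lam in H1 as [? [? ?]]. exfalso; eapply HX; eauto. }
  apply reds_app_inv in H2 as [[P2 [Q2 [E [H2 _]]]] | [A [N H2]]].
  2: { apply reds_lift_lam in H2 as [? [? ?]]. exfalso; eapply HY; eauto. }
  inversion E; subst.
  apply reds_lift_inv in H1 as [t1 [-> ?]].
  apply reds_lift_inv in H2 as [t2 [Ht2 ?]].
  apply lift_inj in Ht2. subst. exists t2; auto.
Qed.

(* [equiv] with the number of its eta steps plus one, the measure of the chain argument. *)
Inductive equiv_sized : nat -> term -> term -> Prop :=
  | es_join L M N : reds L N -> reds M N -> equiv_sized 1 L M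
  | es_eta1 n L M A L' M' :
      reds L (lam A L') -> reds M M' ->
      equiv_sized n L' (eta_body M') -> equiv_sized (S n) L M
  | es_eta2 n L M A M' L' :
      reds L L' -> reds M (lam A M') ->
      equiv_sized n (eta_body L') M' -> equiv_sized (S n) L M.

Lemma equiv_sized_of_equiv L M : equiv L M -> exists n, equiv_sized n L M.
Proof.
  induction 1 as [| ? ? ? ? ? ? ? ? [n ?] | ? ? ? ? ? ? ? ? [n ?]].
  - exists 1. econstructor; eauto.
  - exists (S n). eapply es_eta1; eauto.
  - exists (S n). eapply es_eta2; eauto.
Qed.

Lemma equiv_sized_sym n L M : equiv_sized n L M -> equiv_sized n M L.
Proof.
  induction 1; [eapply es_join | eapply es_eta2 | eapply es_eta1]; eauto.
Qed.

Inductive conv_chain : nat -> term -> term -> Prop :=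
  | chain_refl X : conv_chain 0 X X
  | chain_join X Y Z n : joinable X Y -> conv_chain n Y Z -> conv_chain n X Z
  | chain_equiv X Y Z s n : equiv_sized s X Y -> conv_chain n Y Z -> conv_chain (s + n) X Z.

Lemma conv_chain_app n X Y m Z : conv_chain n X Y -> conv_chain m Y Z -> conv_chain (n + m) X Z.
Proof.
  induction 1; intros; simpl; auto.
  - eapply chain_join; eauto.
  - rewrite <- Nat.add_assoc. eapply chain_equiv; eauto.
Qed.

Lemma conv_chain_equiv s X Y : equiv_sized s X Y -> conv_chain s X Y.
Proof. intros H. rewrite <- (Nat.add_0_r s). eapply chain_equiv; eauto. constructor. Qed.

Lemma conv_chain_sym n X Y : conv_chain n X Y -> conv_chain n Y X.
Proof.
  induction 1.
  - constructor.
  - rewrite <- (Nat.add_0_r n). eapply conv_chain_app; eauto.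
    eapply chain_join; [apply joinable_sym; eauto | constructor].
  - rewrite Nat.add_comm. eapply conv_chain_app; eauto.
    apply conv_chain_equiv, equiv_sized_sym; auto.
Qed.

(* Walking along a chain that starts at a rigid [X0], every term met is either rigid and
   joinable with [X0], or reduces to abstractions whose bodies are connected to the
   eta-expansion of [X0] by strictly shorter chains; [b] bounds the cost spent so far. *)
Definition chain_state (X0 : term) (b : nat) (Y : term) : Prop :=
  (rigid Y /\ joinable X0 Y) \/
  (reds_to_lam Y /\ forall A W, reds Y (lam A W) ->
      exists c, c < b /\ conv_chain c W (eta_body X0)).

Lemma chain_state_mono X0 b b' Y : b <= b' -> chain_state X0 b Y -> chain_state X0 b' Y.
Proof.
  intros Hb [H | [H1 H2]]; [left; auto | right; split; auto].
  intros A W H. destruct (H2 A W H) as [c [? ?]]. exists c. split; auto. lia.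
Qed.

Lemma chain_state_joinable X0 b Y Y' :
  joinable Y Y' -> chain_state X0 b Y -> chain_state X0 b Y'.
Proof.
  intros HJ [[H1 H2] | [[A [W H1]] H2]].
  - left. split; [eapply rigid_joinable | eapply joinable_trans]; eauto.
  - right. split.
    + destruct HJ as [N [H3 H4]].
      destruct (reds_lam_common _ _ _ _ H3 H1) as [A3 [W3 [? [? ?]]]].
      exists A3, W3. eapply reds_trans; eauto.
    + intros A2 W2 H3. destruct (H2 A W H1) as [c [? ?]].
      exists c. split; auto. eapply chain_join; [|eauto].
      apply joinable_sym. eapply joinable_lam_bodies; eauto.
Qed.

Section RigidChains.
Variable n : nat.
Hypothesis IHn :
  forall m, m < n -> forall X Z, conv_chain m X Z -> rigid X -> rigid Z -> joinable X Z.
Variable X0 : term.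
Hypothesis HX0 : rigid X0.

Lemma chain_state_close Y M c : reds Y M -> rigid Y ->
  conv_chain c (eta_body X0) (eta_body M) -> c < n -> joinable X0 Y.
Proof.
  intros HM HY Hc Hcn.
  assert (rigid M) by (eapply rigid_reds; eauto).
  assert (HJ : joinable (eta_body X0) (eta_body M)) by (eapply IHn; eauto using rigid_eta_body).
  apply joinable_eta_body_inv in HJ; auto.
  eapply joinable_trans; eauto. apply joinable_sym, reds_joinable; auto.
Qed.

Lemma chain_state_equiv s Y Y' b : equiv_sized s Y Y' -> b + s <= n ->
  chain_state X0 b Y -> chain_state X0 (b + s) Y'.
Proof.
  intros He; revert b.
  destruct He as [Y Y' N HL HM | m Y Y' A W M HL HM He | m Y Y' A W' L HL HM He];
    intros b Hb Hs.
  - eapply chain_state_mono; [|eapply chain_state_joinable; eauto]; [lia | exists N; auto].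
  - destruct Hs as [[H1 _] | [_ H2]]; [exfalso; eapply H1; eauto|].
    destruct (H2 _ _ HL) as [c [Hc Hch]].
    destruct (classic (rigid Y')) as [HR | HR].
    + left. split; auto. eapply (chain_state_close _ _ (c + m)); eauto; [|lia].
      eapply conv_chain_app; [apply conv_chain_sym; eauto | apply conv_chain_equiv; auto].
    + right. split; [apply not_rigid_reds_to_lam; auto|].
      intros A2 W2 H3. destruct (reds_lam_common _ _ _ _ HM H3) as [A3 [W3 [H4 [H5 _]]]].
      exists (m + c). split; [lia|].
      apply chain_join with W3; [apply reds_joinable; auto|].
      apply chain_join with (eta_body M);
        [apply joinable_sym, reds_joinable; eapply reds_eta_body; eauto|].
      eapply chain_equiv; eauto. apply equiv_sized_sym; auto.
  - right. split; [exists A, W'; auto|].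
    intros A2 W2 H3.
    assert (HJ : joinable W2 W') by (eapply joinable_lam_bodies; [apply joinable_refl | |]; eauto).
    destruct Hs as [[H1 H2] | [[A1 [W1 H1]] H2]].
    + exists (m + 0). split; [lia|].
      apply chain_join with W'; auto. eapply chain_equiv; [apply equiv_sized_sym; eauto|].
      apply chain_join with (eta_body X0); [|constructor].
      apply eta_body_joinable, joinable_sym. eapply joinable_trans; eauto using reds_joinable.
    + destruct (reds_lam_common _ _ _ _ HL H1) as [A3 [W3 [H4 [H5 H6]]]].
      destruct (H2 _ _ H6) as [c [Hc Hch]].
      exists (m + c). split; [lia|].
      apply chain_join with W'; auto. eapply chain_equiv; [apply equiv_sized_sym; eauto|].
      apply chain_join with W3; auto. apply reds_joinable. eapply reds_eta_body; eauto.
Qed.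

Lemma chain_state_rigid_end m Y Z : conv_chain m Y Z ->
  forall b, b + m <= n -> chain_state X0 b Y -> rigid Z -> joinable X0 Z.
Proof.
  induction 1; intros b Hb Hs HZ.
  - destruct Hs as [[_ H] | [[A [W H]] _]]; auto. exfalso; eapply HZ; eauto.
  - eapply IHconv_chain; eauto. eapply chain_state_joinable; eauto.
  - apply (IHconv_chain (b + s)); [lia | eapply chain_state_equiv; eauto; lia | auto].
Qed.

End RigidChains.

Theorem conv_chain_rigid_joinable n X Z : conv_chain n X Z -> rigid X -> rigid Z -> joinable X Z.
Proof.
  revert X Z. induction n as [n IH] using (well_founded_induction lt_wf).
  intros X Z Hc HX HZ. apply (chain_state_rigid_end n IH X HX n X Z Hc 0); auto.
  left. split; auto. apply joinable_refl.
Qed.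

(** * Typing: structural properties and substitution *)

Definition fresh (l : list atom) : atom := S (list_max l).

Lemma fresh_not_in l : ~ In (fresh l) l.
Proof.
  intros H. assert (Hmax : list_max l <= list_max l) by lia.
  apply list_max_le in Hmax. rewrite Forall_forall in Hmax.
  specialize (Hmax _ H). unfold fresh in Hmax. lia.
Qed.

Lemma snoc_eq_app_cons (G G1 G2 : ctx) x A y B :
  G ++ [(x, A)] = G1 ++ (y, B) :: G2 ->
  (G1 = G /\ y = x /\ B = A /\ G2 = []) \/
  (exists G2', G2 = G2' ++ [(x, A)] /\ G = G1 ++ (y, B) :: G2').
Proof.
  intros H. destruct G2 as [|e G2] using rev_ind.
  - apply app_inj_tail in H as [? E]. inversion E; subst. left; auto.
  - right. exists G2. rewrite app_comm_cons, app_assoc in H.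
    apply app_inj_tail in H as [? ?]. subst. auto.
Qed.

Definition ctx_typed (P : ctx -> term -> term -> Prop) (G : ctx) : Prop :=
  forall G1 y B G2, G = G1 ++ (y, B) :: G2 -> exists i, typing G1 B (univ i) /\ P G1 B (univ i).

Scheme wf_mut := Induction for wf Sort Prop
  with typing_mut := Induction for typing Sort Prop.

(* The hypotheses also hold for the types of all context entries; [t_lam] has no premise
   typing its domain, which is recovered from the well-formed extended context. *)
Lemma typing_ctx_ind (P : ctx -> term -> term -> Prop)
  (Hvar : forall G x A, wf G -> ctx_typed P G -> In (x, A) G -> P G (fvar x) A)
  (Huniv : forall G i, wf G -> ctx_typed P G -> P G (univ i) (univ (S i)))
  (Hpi : forall G A B i j L, typing G A (univ i) -> P G A (univ i) ->
     (forall x, ~ In x L -> typing (G ++ [(x, A)]) (open B x) (univ j)) ->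
     (forall x, ~ In x L -> P (G ++ [(x, A)]) (open B x) (univ j)) ->
     P G (pi A B) (univ (Nat.max i j)))
  (Happ : forall G M N A B, typing G M (pi A B) -> P G M (pi A B) -> typing G N A -> P G N A ->
     P G (app M N) (inst B N))
  (Hlam : forall G A M B L,
     (forall x, ~ In x L -> typing (G ++ [(x, A)]) (open M x) (open B x)) ->
     (forall x, ~ In x L -> P (G ++ [(x, A)]) (open M x) (open B x)) ->
     (exists i, typing G A (univ i) /\ P G A (univ i)) -> P G (lam A M) (pi A B))
  (Hconv : forall G M A B i, typing G M A -> P G M A -> typing G B (univ i) -> P G B (univ i) ->
     equiv A B -> P G M B) :
  forall G M A, typing G M A -> P G M A.
Proof.
  enough (H : forall G M A, typing G M A -> P G M A /\ ctx_typed P G) by apply H.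
  apply (typing_mut (fun G _ => ctx_typed P G) (fun G M A _ => P G M A /\ ctx_typed P G)).
  - intros G1 y B G2 H. destruct G1; discriminate.
  - intros G x A i _ IHw Ht IHt _ G1 y B G2 H.
    apply snoc_eq_app_cons in H as [[? [? [? ?]]] | [G2' [? ?]]]; subst; eauto.
    exists i. split; auto. apply IHt.
  - split; auto.
  - split; auto.
  - intros G A B i j L ? IHA ? IHB. split; [apply Hpi with L | apply IHA]; auto.
    + apply IHA.
    + intros; apply IHB; auto.
  - intros G M N A B ? IHM ? IHN.
    split; [apply Happ with A | apply IHM]; auto; [apply IHM | apply IHN].
  - intros G A M B L ? IH. destruct (IH (fresh L) (fresh_not_in L)) as [_ HC].
    split.
    + apply Hlam with L; auto; [intros; apply IH; auto|].
      destruct (HC G (fresh L) A []) as [i [? ?]]; eauto.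
    + intros G1 y B0 G2 ->. apply (HC G1 y B0 (G2 ++ [(fresh L, A)])).
      rewrite <- app_assoc. reflexivity.
  - intros G M A B i ? IHM ? IHB ?. split; [apply Hconv with A i | apply IHM]; auto;
      [apply IHM | apply IHB].
Qed.

Lemma in_dom (G : ctx) x A : In (x, A) G -> In x (dom G).
Proof. intros H. apply in_map_iff. exists (x, A); auto. Qed.

Lemma in_dom_inv (G : ctx) x : In x (dom G) -> exists A, In (x, A) G.
Proof. intros H. apply in_map_iff in H as [[y A] [? ?]]. simpl in *; subst; eauto. Qed.

Lemma in_dom_app (G1 G2 : ctx) x : In x (dom (G1 ++ G2)) <-> In x (dom G1) \/ In x (dom G2).
Proof. unfold dom. rewrite map_app, in_app_iff. tauto. Qed.

Lemma dom_nodup_functional (G : ctx) x A B : NoDup (dom G) -> In (x, A) G -> In (x, B) G -> A = B.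
Proof.
  induction G as [|[y C] G IH]; simpl; intros Hnd HA HB; [tauto|].
  inversion Hnd as [|? ? Hy]; subst.
  destruct HA as [HA | HA], HB as [HB | HB]; try congruence; eauto.
  - inversion HA; subst. exfalso; eauto using in_dom.
  - inversion HB; subst. exfalso; eauto using in_dom.
Qed.

Lemma wf_dom_nodup G : wf G -> NoDup (dom G).
Proof.
  induction 1; [constructor|]. unfold dom in *. rewrite map_app. apply NoDup_app; auto.
  - repeat constructor; auto.
  - intros z Hz [<- | []]. contradiction.
Qed.

Lemma wf_app_l G1 G2 : wf (G1 ++ G2) -> wf G1.
Proof.
  revert G1; induction G2 as [|e G2 IH] using rev_ind; intros G1 H.
  - rewrite app_nil_r in H; auto.
  - rewrite app_assoc in H. inversion H as [E | G x A i ? ? ? E].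
    + destruct (G1 ++ G2); discriminate.
    + apply app_inj_tail in E as [-> _]. auto.
Qed.

Lemma typing_wf G M A : typing G M A -> wf G.
Proof. induction 1; auto. eapply wf_app_l, (H0 (fresh L)), fresh_not_in. Qed.

Lemma wf_snoc_inv G x A : wf (G ++ [(x, A)]) -> (exists i, typing G A (univ i)) /\ ~ In x (dom G).
Proof.
  intros H. inversion H as [E | G' x' A' i ? ? ? E]; [destruct G; discriminate|].
  apply app_inj_tail in E as [-> E]. inversion E; subst. eauto.
Qed.

Lemma wf_entry_inv G1 x A G2 : wf (G1 ++ (x, A) :: G2) ->
  (exists i, typing G1 A (univ i)) /\ ~ In x (dom G1).
Proof.
  intros H. apply wf_snoc_inv, (wf_app_l _ G2). rewrite <- app_assoc. exact H.
Qed.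

Lemma typing_lc G M A : typing G M A -> lc_at 0 M /\ lc_at 0 A.
Proof.
  induction 1 using typing_ctx_ind; simpl.
  - apply in_split in H1 as [G1 [G2 E]]. destruct (H0 _ _ _ _ E) as [i [_ [? _]]]. auto.
  - auto.
  - destruct (H1 _ (fresh_not_in L)) as [? _]. intuition. eapply lc_bsubst_inv; eauto.
  - destruct IHtyping1 as [? [? ?]], IHtyping2. unfold inst. split; auto. apply lc_bsubst; auto.
  - destruct H1 as [i [_ [? _]]]. destruct (H0 _ (fresh_not_in L)).
    split; split; auto; eapply lc_bsubst_inv; eauto.
  - intuition.
Qed.

Lemma open_fv_dom (G : ctx) A B L :
  (forall x, ~ In x L -> incl (fv (open B x)) (dom (G ++ [(x, A)]))) -> incl (fv B) (dom G).
Proof.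
  intros HB z Hz. pose proof (fresh_not_in (z :: L)) as Hx. simpl in Hx.
  assert (HxL : ~ In (fresh (z :: L)) L) by tauto.
  specialize (HB _ HxL z (fv_bsubst_intro _ _ _ _ Hz)).
  apply in_dom_app in HB as [? | [Ez | []]]; auto. exfalso. apply Hx. left. symmetry. exact Ez.
Qed.

Lemma typing_fv_dom G M A : typing G M A -> incl (fv M) (dom G) /\ incl (fv A) (dom G).
Proof.
  induction 1 using typing_ctx_ind; simpl.
  - split; [intros z [<- | []]; eapply in_dom; eauto|].
    apply in_split in H1 as [G1 [G2 ->]]. destruct (H0 _ _ _ _ eq_refl) as [i [_ [HA _]]].
    intros z Hz. apply in_dom_app; auto.
  - split; intros z [].
  - split; [|intros z []]. apply incl_app; [apply IHtyping|].
    apply open_fv_dom with (A := A) (L := L). intros x Hx; apply H1; auto.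
  - destruct IHtyping1 as [HM HB], IHtyping2 as [HN HA]. split; [apply incl_app; auto|].
    intros z Hz. unfold inst in Hz. apply fv_bsubst_inv in Hz as [? | ?]; auto.
    apply HB; simpl; auto using in_or_app.
  - destruct H1 as [i [_ [HA _]]].
    split; apply incl_app; auto;
      apply open_fv_dom with (A := A) (L := L); intros x Hx; apply H0; auto.
  - intuition.
Qed.

Lemma wf_entry_fv G y A : wf G -> In (y, A) G -> incl (fv A) (dom G).
Proof.
  intros HG HA z Hz. apply in_split in HA as [G1 [G2 ->]].
  destruct (wf_entry_inv _ _ _ _ HG) as [[i Hi] _].
  apply in_dom_app. left. apply (proj1 (typing_fv_dom _ _ _ Hi)), Hz.
Qed.

Lemma typing_weaken G M A G' : typing G M A -> wf G' -> incl G G' -> typing G' M A.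
Proof.
  intros H; revert G'; induction H using typing_ctx_ind; intros G' HG' Hincl.
  - apply t_var; auto.
  - apply t_univ; auto.
  - apply t_pi with (L := L ++ dom G'); [eauto|].
    intros x Hx. rewrite in_app_iff in Hx.
    apply H1; [tauto | eapply wf_ext; eauto; tauto | apply incl_app_app, incl_refl; auto].
  - eapply t_app; eauto.
  - destruct H1 as [i [_ HA]].
    apply t_lam with (L := L ++ dom G'). intros x Hx. rewrite in_app_iff in Hx.
    apply H0; [tauto | eapply wf_ext; eauto; tauto | apply incl_app_app, incl_refl; auto].
  - eapply t_conv; eauto.
Qed.

Lemma typing_weaken_app G M A G' : typing G M A -> wf (G ++ G') -> typing (G ++ G') M A.
Proof. intros H Hw. eapply typing_weaken; eauto. apply incl_appl, incl_refl. Qed.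

Lemma equiv_fsubst L M x u : lc_at 0 u -> equiv L M -> equiv (fsubst x u L) (fsubst x u M).
Proof.
  intros Hu; induction 1 as [L M N HL HM | L M A L' M' HL HM _ IH | L M A M' L' HL HM _ IH].
  - eapply eq_join; eapply reds_fsubst; eauto.
  - apply (reds_fsubst _ _ x u) in HL; auto.
    eapply eq_eta1; [exact HL | apply reds_fsubst; eauto |].
    simpl in IH. rewrite fsubst_lift in IH; auto.
  - apply (reds_fsubst _ _ x u) in HM; auto.
    eapply eq_eta2; [apply reds_fsubst; eauto | exact HM |].
    simpl in IH. rewrite fsubst_lift in IH; auto.
Qed.

Definition csubst (x : atom) (u : term) (G : ctx) : ctx :=
  map (fun e => (fst e, fsubst x u (snd e))) G.

Lemma dom_csubst x u G : dom (csubst x u G) = dom G.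
Proof. unfold dom, csubst. rewrite map_map. reflexivity. Qed.

Lemma csubst_app x u G1 G2 : csubst x u (G1 ++ G2) = csubst x u G1 ++ csubst x u G2.
Proof. apply map_app. Qed.

Lemma in_csubst x u (G : ctx) y A : In (y, A) G -> In (y, fsubst x u A) (csubst x u G).
Proof. intros H. apply in_map_iff. exists (y, A); auto. Qed.

Lemma open_fsubst B x N y : lc_at 0 N -> y <> x ->
  fsubst x N (open B y) = open (fsubst x N B) y.
Proof.
  intros HN Hy. unfold open, inst. rewrite fsubst_bsubst by auto. simpl.
  destruct (Nat.eqb_spec y x); [contradiction | auto].
Qed.

Definition fsubst_stable (G : ctx) (M T : term) : Prop :=
  forall G1 x C G2 N, G = G1 ++ (x, C) :: G2 -> typing G1 N C ->
  typing (G1 ++ csubst x N G2) (fsubst x N M) (fsubst x N T).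

Lemma wf_csubst G1 x C G2 N : wf (G1 ++ (x, C) :: G2) ->
  ctx_typed fsubst_stable (G1 ++ (x, C) :: G2) -> typing G1 N C -> wf (G1 ++ csubst x N G2).
Proof.
  revert G1; induction G2 as [|[y B] G2 IH] using rev_ind; intros G1 Hw HC HN.
  - rewrite app_nil_r. eapply typing_wf; eauto.
  - rewrite csubst_app, app_assoc. rewrite app_comm_cons, app_assoc in Hw, HC.
    destruct (wf_snoc_inv _ _ _ Hw) as [_ Hy].
    destruct (HC _ y B [] eq_refl) as [i [_ Hi]].
    specialize (Hi G1 x C G2 N eq_refl HN).
    eapply wf_ext; eauto.
    + apply IH; auto; [eapply wf_app_l; eauto|].
      intros G3 z D G4 E. apply (HC G3 z D (G4 ++ [(y, B)])). rewrite E, <- app_assoc; auto.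
    + rewrite in_dom_app, dom_csubst. rewrite in_dom_app in Hy. simpl in Hy. tauto.
Qed.

Lemma fsubst_stable_var G y A : wf G -> ctx_typed fsubst_stable G -> In (y, A) G ->
  fsubst_stable G (fvar y) A.
Proof.
  intros HG HGs HyA G1 x C G2 N -> HN.
  assert (Hwf : wf (G1 ++ csubst x N G2)) by (eapply wf_csubst; eauto).
  destruct (wf_entry_inv _ _ _ _ HG) as [[k Hk] Hx].
  assert (HCx : ~ In x (fv C)) by (intro Hc; apply Hx, (proj1 (typing_fv_dom _ _ _ Hk)), Hc).
  simpl. destruct (Nat.eqb_spec y x) as [-> | Hyx].
  - assert (A = C) as ->.
    { eapply dom_nodup_functional; [apply wf_dom_nodup, HG | exact HyA | apply in_elt]. }
    rewrite fsubst_fresh by auto. eapply typing_weaken; eauto. apply incl_appl, incl_refl.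
  - apply t_var; auto. apply in_app_iff in HyA as [HyA | [E | HyA]].
    + rewrite fsubst_fresh; [apply in_or_app; auto|].
      intros Hf. apply Hx. eapply wf_entry_fv; eauto using typing_wf.
    + inversion E; subst; contradiction.
    + apply in_or_app. right. apply in_csubst; auto.
Qed.

Lemma typing_fsubst_stable G M T : typing G M T -> fsubst_stable G M T.
Proof.
  induction 1 using typing_ctx_ind; intros G1 a C G2 U -> HU;
    pose proof (proj1 (typing_lc _ _ _ HU)) as HUlc; simpl.
  - eapply fsubst_stable_var; eauto.
  - apply t_univ. eapply wf_csubst; eauto.
  - apply t_pi with (L := a :: L); [eapply IHtyping; eauto|].
    intros y Hy. simpl in Hy. rewrite <- open_fsubst by (auto; intros ->; tauto).
    specialize (H1 y ltac:(tauto) G1 a C (G2 ++ [(y, A)]) U).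
    rewrite csubst_app, app_assoc in H1. apply H1; auto. rewrite <- app_assoc; reflexivity.
  - unfold inst. rewrite fsubst_bsubst by auto. eapply t_app; eauto.
  - apply t_lam with (L := a :: L).
    intros y Hy. simpl in Hy. rewrite <- !open_fsubst by (auto; intros ->; tauto).
    specialize (H0 y ltac:(tauto) G1 a C (G2 ++ [(y, A)]) U).
    rewrite csubst_app, app_assoc in H0. apply H0; auto. rewrite <- app_assoc; reflexivity.
  - eapply t_conv; eauto using equiv_fsubst.
Qed.

Lemma typing_fsubst_last G x C M T N : typing (G ++ [(x, C)]) M T -> typing G N C ->
  typing G (fsubst x N M) (fsubst x N T).
Proof.
  intros HM HN. pose proof (typing_fsubst_stable _ _ _ HM G x C [] N eq_refl HN) as H.
  rewrite app_nil_r in H. exact H.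
Qed.

Lemma typing_rename_last G x A y M T : typing (G ++ [(x, A)]) M T -> ~ In y (dom G) ->
  typing (G ++ [(y, A)]) (fsubst x (fvar y) M) (fsubst x (fvar y) T).
Proof.
  intros H Hy. destruct (Nat.eq_dec x y) as [<- | Hxy]; [rewrite !fsubst_id; auto|].
  destruct (wf_snoc_inv _ _ _ (typing_wf _ _ _ H)) as [[i Hi] Hx].
  assert (Hwy : wf (G ++ [(y, A)])) by (eapply wf_ext; eauto using typing_wf).
  apply typing_fsubst_last with (C := A).
  - eapply typing_weaken; eauto.
    + eapply wf_ext; [eauto | apply typing_weaken_app; eauto |].
      rewrite in_dom_app. simpl. intuition.
    + apply incl_app_app; [apply incl_appl|]; apply incl_refl.
  - apply t_var; auto using in_or_app, in_eq.
Qed.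

Lemma typing_open_rename G x A y M B : typing (G ++ [(x, A)]) (open M x) (open B x) ->
  ~ In y (dom G) -> ~ In x (fv M) -> ~ In x (fv B) ->
  typing (G ++ [(y, A)]) (open M y) (open B y).
Proof.
  intros H Hy HM HB. apply typing_rename_last with (y := y) in H; auto.
  unfold open, inst in *. rewrite !fsubst_bsubst_fvar in H; simpl; auto.
Qed.

Lemma typing_ctx_conv_last G x A A' M T k : typing (G ++ [(x, A)]) M T ->
  typing G A' (univ k) -> equiv A' A -> typing (G ++ [(x, A')]) M T.
Proof.
  intros H HA' Hconv.
  destruct (wf_snoc_inv _ _ _ (typing_wf _ _ _ H)) as [[i Hi] Hx].
  set (z := fresh (x :: dom G ++ fv M ++ fv T)).
  pose proof (fresh_not_in (x :: dom G ++ fv M ++ fv T)) as Hz.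
  fold z in Hz. simpl in Hz. rewrite !in_app_iff in Hz.
  assert (Hwz : wf (G ++ [(z, A')])) by (eapply wf_ext; eauto using typing_wf).
  assert (HMz : typing (G ++ [(z, A')]) (fsubst x (fvar z) M) (fsubst x (fvar z) T)).
  { apply typing_fsubst_last with (C := A).
    - eapply typing_weaken; eauto.
      + eapply wf_ext; [eauto | apply typing_weaken_app; eauto |].
        rewrite in_dom_app. simpl. intuition.
      + apply incl_app_app; [apply incl_appl|]; apply incl_refl.
    - eapply t_conv; [apply t_var; auto using in_or_app, in_eq | |]; eauto using typing_weaken_app. }
  apply typing_rename_last with (y := x) in HMz; auto.
  rewrite !fsubst_rename_inv in HMz; tauto.
Qed.

(** * Type correctness and subject reduction *)

Lemma typing_open_subst G y A M B N : typing (G ++ [(y, A)]) (open M y) (open B y) ->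
  typing G N A -> ~ In y (fv M) -> ~ In y (fv B) -> typing G (inst M N) (inst B N).
Proof.
  intros HM HN HyM HyB. apply (typing_fsubst_last _ _ _ _ _ N) in HM; auto.
  pose proof (proj1 (typing_lc _ _ _ HN)).
  unfold open, inst in *. rewrite !fsubst_bsubst_fvar in HM; auto.
Qed.

Lemma pi_typing_inv G A B T : typing G (pi A B) T ->
  exists i j L, typing G A (univ i) /\
    (forall x, ~ In x L -> typing (G ++ [(x, A)]) (open B x) (univ j)).
Proof.
  intros H; remember (pi A B) as P; induction H; try discriminate; eauto.
  inversion HeqP; subst; eauto.
Qed.

Lemma lam_typing_chain G C Q T : typing G (lam C Q) T ->
  exists B L n, (forall y, ~ In y L -> typing (G ++ [(y, C)]) (open Q y) (open B y)) /\
    conv_chain n (pi C B) T.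
Proof.
  intros H; remember (lam C Q) as P; induction H; try discriminate.
  - inversion HeqP; subst. exists B, L, 0. split; auto. constructor.
  - destruct (IHtyping1 HeqP) as [B0 [L [n [? ?]]]].
    destruct (equiv_sized_of_equiv _ _ H1) as [s ?].
    exists B0, L, (n + s). split; auto. eapply conv_chain_app; eauto using conv_chain_equiv.
Qed.

Lemma lam_pi_typing_inv G C Q A B : typing G (lam C Q) (pi A B) ->
  exists B0 L, (forall y, ~ In y L -> typing (G ++ [(y, C)]) (open Q y) (open B0 y)) /\
    joinable C A /\ joinable B0 B.
Proof.
  intros H. destruct (lam_typing_chain _ _ _ _ H) as [B0 [L [n [HQ Hch]]]].
  apply conv_chain_rigid_joinable, joinable_pi_inv in Hch; auto using rigid_pi.
  exists B0, L. tauto.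
Qed.

Theorem typing_type_typed G M T : typing G M T -> exists i, typing G T (univ i).
Proof.
  induction 1 using typing_ctx_ind.
  - apply in_split in H1 as [G1 [G2 ->]].
    destruct (H0 G1 x A G2 eq_refl) as [i [Hi _]]. exists i.
    apply typing_weaken with G1; auto. apply incl_appl, incl_refl.
  - exists (S (S i)). apply t_univ; auto.
  - exists (S (Nat.max i j)). apply t_univ. eapply typing_wf; eauto.
  - destruct IHtyping1 as [k Hk].
    destruct (pi_typing_inv _ _ _ _ Hk) as [i [j [L [HA HB]]]].
    pose proof (fresh_not_in (L ++ fv B)) as Hx. rewrite in_app_iff in Hx.
    exists j. apply (typing_open_subst _ (fresh (L ++ fv B)) A B (univ j)); auto; tauto.
  - destruct H1 as [i [HA _]].
    set (L' := L ++ fv B ++ dom G).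
    pose proof (fresh_not_in L') as Hx. unfold L' in Hx. rewrite !in_app_iff in Hx.
    destruct (H0 (fresh L') ltac:(tauto)) as [j Hj].
    exists (Nat.max i j). apply t_pi with (L := L'); auto.
    intros y Hy. unfold L' in Hy. rewrite !in_app_iff in Hy.
    apply (typing_open_rename _ (fresh L') A y B (univ j)); auto; simpl; tauto.
  - exists i. auto.
Qed.

Lemma subject_red1 G M T M' : typing G M T -> red1 M M' -> typing G M' T.
Proof.
  intros H; revert M'; induction H using typing_ctx_ind; intros M' Hred;
    [.. | eapply t_conv; eauto]; inversion Hred; subst.
  - apply t_pi with (L := L); auto.
    intros x Hx. eapply typing_ctx_conv_last; eauto.
    apply joinable_equiv. exists A'. split; auto using red1_reds.
  - apply t_pi with (L := L); auto.
    intros x Hx. apply H1; auto. apply red1_bsubst; auto.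
  - destruct (typing_type_typed _ _ _ (t_app _ _ _ _ _ H H0)) as [k Hk].
    destruct (lam_pi_typing_inv _ _ _ _ _ H) as [B0 [L [HB [HA0 HB0]]]].
    set (y := fresh (L ++ dom G ++ fv N0 ++ fv B0)).
    pose proof (fresh_not_in (L ++ dom G ++ fv N0 ++ fv B0)) as Hy.
    fold y in Hy. rewrite !in_app_iff in Hy.
    specialize (HB y ltac:(tauto)).
    destruct (wf_snoc_inv _ _ _ (typing_wf _ _ _ HB)) as [[c Hc] _].
    assert (HN : typing G N A0) by (eapply t_conv; eauto using joinable_equiv, joinable_sym).
    eapply t_conv; [eapply typing_open_subst; eauto; tauto | eauto |].
    destruct HB0 as [B1 [? ?]]. apply joinable_equiv. exists (inst B1 N).
    split; apply reds_bsubst; auto.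
  - eapply t_app; eauto.
  - destruct (typing_type_typed _ _ _ (t_app _ _ _ _ _ H H0)) as [k Hk].
    eapply t_conv; [eapply t_app; eauto | eauto |].
    apply joinable_equiv, joinable_sym, reds_joinable, reds_bsubst_arg, red1_reds; auto.
  - destruct H1 as [i [HA HA']].
    destruct (typing_type_typed _ _ _ (t_lam _ _ _ _ _ H)) as [k Hk].
    eapply t_conv; eauto.
    + apply t_lam with L. intros x Hx. eapply typing_ctx_conv_last; eauto.
      apply joinable_equiv. exists A'. split; auto using red1_reds.
    + apply joinable_equiv. exists (pi A' B). split; auto using red1_reds.
  - apply t_lam with L. intros x Hx. apply H0; auto. apply red1_bsubst; auto.
Qed.

Theorem subject_reduction G M M' T : typing G M T -> reds M M' -> typing G M' T.
Proof. intros H Hred; revert H; induction Hred; eauto using subject_red1. Qed.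

Lemma typing_reds_type G M A A' : typing G M A -> reds A A' -> typing G M A'.
Proof.
  intros HM HA. destruct (typing_type_typed _ _ _ HM) as [i Hi].
  eapply t_conv; [exact HM | eapply subject_reduction; eauto |].
  apply joinable_equiv, reds_joinable; auto.
Qed.

Lemma typed_type_rigid G T i : typing G T (univ i) -> rigid T.
Proof.
  intros H A W HW. eapply subject_reduction in H; eauto.
  destruct (lam_typing_chain _ _ _ _ H) as [B0 [L [n [_ Hch]]]].
  apply conv_chain_rigid_joinable in Hch as [Z [H1 H2]]; auto using rigid_pi, rigid_univ.
  apply reds_univ_inv in H2. subst.
  apply reds_pi_inv in H1 as [? [? [? _]]]. discriminate.
Qed.

Lemma equiv_types_joinable G A B i j : typing G A (univ i) -> typing G B (univ j) ->
  equiv A B -> joinable A B.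
Proof.
  intros HA HB Hequiv. destruct (equiv_sized_of_equiv _ _ Hequiv) as [s Hs].
  eapply conv_chain_rigid_joinable; eauto using conv_chain_equiv, typed_type_rigid.
Qed.

(** * Strengthening *)

Lemma open_fv_incl B x (G : ctx) A : incl (fv B) (dom G) ->
  incl (fv (open B x)) (dom (G ++ [(x, A)])).
Proof.
  intros HB z Hz. apply fv_bsubst_inv in Hz. rewrite in_dom_app. simpl.
  destruct Hz as [[Hz | []] | Hz]; auto.
Qed.

(* Only a reduct of the type survives: the original type may mention deleted variables. *)
Definition strengthens (G : ctx) (M T : term) : Prop :=
  forall G', wf G' -> incl G' G -> incl (fv M) (dom G') -> exists T', typing G' M T' /\ reds T T'.

Lemma strengthens_snoc G x A M T G' i : strengthens (G ++ [(x, A)]) (open M x) T ->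
  wf G' -> incl G' G -> typing G' A (univ i) -> ~ In x (dom G') -> incl (fv M) (dom G') ->
  exists T', typing (G' ++ [(x, A)]) (open M x) T' /\ reds T T'.
Proof.
  intros HM HG' Hincl HA Hx Hfv. apply HM.
  - eapply wf_ext; eauto.
  - apply incl_app_app, incl_refl; auto.
  - apply open_fv_incl; auto.
Qed.

Lemma typing_strengthens G M T : typing G M T -> strengthens G M T.
Proof.
  induction 1 using typing_ctx_ind; intros G' HG' Hincl Hfv;
    simpl in Hfv; try apply incl_app_inv in Hfv as [Hfv1 Hfv2].
  - destruct (in_dom_inv G' x) as [A' HA']; [apply Hfv; left; auto|].
    assert (A' = A) as ->.
    { eapply dom_nodup_functional; [apply wf_dom_nodup | apply Hincl |]; eauto. }
    exists A. split; auto. apply t_var; auto.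
  - exists (univ (S i)). split; auto. apply t_univ; auto.
  - destruct (IHtyping G' HG' Hincl Hfv1) as [T1 [HA HT1]].
    apply reds_univ_inv in HT1 as ->.
    exists (univ (Nat.max i j)). split; auto.
    apply t_pi with (L := L ++ dom G'); auto.
    intros x Hx. rewrite in_app_iff in Hx.
    destruct (strengthens_snoc _ _ _ _ _ G' i (H1 x ltac:(tauto))) as [T2 [HB HT2]]; auto.
    apply reds_univ_inv in HT2 as ->. auto.
  - destruct (IHtyping1 G' HG' Hincl Hfv1) as [T1 [HM HT1]].
    destruct (IHtyping2 G' HG' Hincl Hfv2) as [A2 [HN HA2]].
    apply reds_pi_inv in HT1 as [A1 [B1 [-> [HA1 HB1]]]].
    destruct (reds_confluent _ _ _ HA1 HA2) as [A3 [HA13 HA23]].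
    exists (inst B1 N). split; [|apply reds_bsubst; auto].
    apply t_app with A3; [apply typing_reds_type with (pi A1 B1) | apply typing_reds_type with A2];
      auto using reds_pi.
  - destruct H1 as [i [_ IHA]].
    destruct (IHA G' HG' Hincl Hfv1) as [T1 [HA HT1]].
    apply reds_univ_inv in HT1 as ->.
    set (y := fresh (L ++ dom G' ++ fv M ++ fv B)).
    pose proof (fresh_not_in (L ++ dom G' ++ fv M ++ fv B)) as Hy.
    fold y in Hy. rewrite !in_app_iff in Hy.
    destruct (strengthens_snoc _ _ _ _ _ G' i (H0 y ltac:(tauto))) as [T0 [HM HT0]]; auto.
    apply reds_open_inv in HT0 as [B1 [-> HB1]].
    assert (~ In y (fv B1)) by (intro; apply Hy; do 3 right; eapply reds_fv; eauto).
    exists (pi A B1). split; [|apply reds_pi; auto].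
    apply t_lam with (L := dom G'). intros x Hx.
    eapply typing_open_rename; eauto; tauto.
  - destruct (IHtyping1 G' HG' Hincl Hfv) as [A' [HM HA']].
    destruct (typing_type_typed _ _ _ H) as [a Ha].
    destruct (joinable_trans A' A B) as [D [HA'D HBD]];
      [apply joinable_sym, reds_joinable; auto | eapply equiv_types_joinable; eauto |].
    exists D. split; auto. eapply typing_reds_type; eauto.
Qed.

Theorem typing_strengthen G M T G' : typing G M T -> wf G' -> incl G' G ->
  incl (fv M) (dom G') -> incl (fv T) (dom G') -> typing G' M T.
Proof.
  intros H HG' Hincl HM HT.
  destruct (typing_strengthens _ _ _ H G' HG' Hincl HM) as [T' [HT' HTT']].
  destruct (typing_type_typed _ _ _ H) as [i Hi].
  destruct (typing_strengthens _ _ _ Hi G' HG' Hincl HT) as [U [HU HiU]].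
  apply reds_univ_inv in HiU as ->.
  eapply t_conv; eauto. apply joinable_equiv, joinable_sym, reds_joinable; auto.
Qed.

(** * The context FV(M) *)

Lemma undup_aux_spec l seen :
  NoDup (undup_aux seen l) /\ forall y, In y (undup_aux seen l) <-> In y l /\ ~ In y seen.
Proof.
  revert seen; induction l as [|x l IH]; intros seen; simpl; [split; [constructor | tauto]|].
  destruct (in_dec Nat.eq_dec x seen).
  - destruct (IH seen) as [Hnd Hin]. split; auto. intros y. rewrite Hin.
    destruct (Nat.eq_dec x y); subst; tauto.
  - destruct (IH (x :: seen)) as [Hnd Hin]. split.
    + constructor; auto. rewrite Hin. simpl. tauto.
    + intros y. simpl. rewrite Hin. simpl. destruct (Nat.eq_dec x y); subst; tauto.
Qed.

Lemma undup_nodup l : NoDup (undup l).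
Proof. apply undup_aux_spec. Qed.

Lemma in_undup l y : In y (undup l) <-> In y l.
Proof. unfold undup. rewrite (proj2 (undup_aux_spec l [])). simpl. tauto. Qed.

Lemma lookup_in G x A : lookup x G = Some A -> In (x, A) G.
Proof.
  induction G as [|[y B] G IH]; simpl; [discriminate|].
  destruct (Nat.eqb_spec x y); [intros E; inversion E; subst|]; auto.
Qed.

Lemma in_lookup G x A : NoDup (dom G) -> In (x, A) G -> lookup x G = Some A.
Proof.
  induction G as [|[y B] G IH]; simpl; intros Hnd HA; [tauto|].
  inversion Hnd as [|? ? Hy]; subst. destruct (Nat.eqb_spec x y) as [-> | Hxy].
  - destruct HA as [E | HA]; [congruence|]. exfalso; eauto using in_dom.
  - destruct HA as [E | HA]; [congruence | auto].
Qed.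

Lemma in_entries G xs x A : In (x, A) (entries G xs) <-> In x xs /\ lookup x G = Some A.
Proof.
  unfold entries. rewrite in_flat_map. split.
  - intros [y [Hy HA]]. destruct (lookup y G) eqn:E; simpl in HA; [|tauto].
    destruct HA as [HA | []]. inversion HA; subst. auto.
  - intros [Hx Hl]. exists x. rewrite Hl. simpl. auto.
Qed.

Lemma entries_nodup G xs : NoDup xs -> NoDup (dom (entries G xs)).
Proof.
  induction 1 as [|x xs Hx _ IH]; [constructor|]. unfold entries in *. simpl.
  destruct (lookup x G) eqn:E; simpl; auto. constructor; auto.
  intros Hin. apply in_dom_inv in Hin as [B HB]. apply Hx, (in_entries G xs x B), HB.
Qed.

Lemma in_cunion G1 G2 e : In e (cunion G1 G2) <-> In e G1 \/ In e G2.
Proof.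
  unfold cunion. rewrite in_app_iff, filter_In.
  destruct (in_dec entry_eq_dec e G1); intuition.
Qed.

Lemma app_eq_app_cons (A B H1 H2 : ctx) e : A ++ B = H1 ++ e :: H2 ->
  (exists H2', A = H1 ++ e :: H2') \/ (exists K1, H1 = A ++ K1 /\ B = K1 ++ e :: H2).
Proof.
  revert H1; induction A as [|a A IH]; intros H1 E; simpl in *; [right; exists H1; auto|].
  destruct H1 as [|h H1]; simpl in E; inversion E; subst; [left; exists A; auto|].
  destruct (IH _ H3) as [[H2' ->] | [K1 [-> ->]]]; [left; exists H2' | right; exists K1]; auto.
Qed.

Lemma filter_eq_app_cons (f : atom * term -> bool) l K1 e K2 : filter f l = K1 ++ e :: K2 ->
  exists P1 P2, l = P1 ++ e :: P2 /\ filter f P1 = K1.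
Proof.
  revert K1; induction l as [|a l IH]; intros K1 E; simpl in *; [destruct K1; discriminate|].
  destruct (f a) eqn:Ef.
  - destruct K1 as [|k K1]; simpl in E; inversion E; subst; [exists [], l; auto|].
    destruct (IH _ H1) as [P1 [P2 [-> ?]]]. exists (k :: P1), P2. simpl. rewrite Ef. subst; auto.
  - destruct (IH _ E) as [P1 [P2 [-> ?]]]. exists (a :: P1), P2. simpl. rewrite Ef. auto.
Qed.

Lemma dom_filter_nodup (f : atom * term -> bool) (l : ctx) :
  NoDup (dom l) -> NoDup (dom (filter f l)).
Proof.
  induction l as [|a l IH]; simpl; intros Hnd; auto. inversion Hnd as [|? ? Ha]; subst.
  destruct (f a); simpl; auto. constructor; auto. intros Hin. apply Ha.
  apply in_map_iff in Hin as [b [? Hb]]. apply filter_In in Hb. apply in_map_iff. exists b. tauto.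
Qed.

Definition closed_subctx (G K : ctx) : Prop :=
  incl K G /\ NoDup (dom K) /\
  forall K1 y B K2, K = K1 ++ (y, B) :: K2 -> incl (fv B) (dom K1).

Lemma closed_subctx_nil G : closed_subctx G [].
Proof. split; [|split]; [intros a [] | constructor | intros [] ? ? ? ?; discriminate]. Qed.

Section ClosedSubcontexts.
Variable G : ctx.
Hypothesis HG : wf G.

Lemma wf_closed_subctx K : closed_subctx G K -> wf K.
Proof.
  induction K as [|[y B] K IH] using rev_ind; intros [Hincl [Hnd Hord]]; [constructor|].
  unfold dom in Hnd. rewrite map_app in Hnd.
  assert (HK : wf K).
  { apply IH. split; [|split].
    - intros a Ha. apply Hincl, in_or_app; auto.
    - eapply NoDup_app_remove_r; eauto.
    - intros K1 y0 B0 K2 ->. apply (Hord K1 y0 B0 (K2 ++ [(y, B)])). rewrite <- app_assoc; auto. }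
  assert (HyG : In (y, B) G) by (apply Hincl, in_or_app; simpl; auto).
  apply in_split in HyG as [G1 [G2 EG]].
  destruct (wf_entry_inv G1 y B G2) as [[i Hi] _]; [rewrite <- EG; auto|].
  apply wf_ext with (i := i); auto.
  - apply typing_strengthen with G; auto.
    + rewrite EG in HG |- *. apply typing_weaken_app; auto.
    + intros a Ha. apply Hincl, in_or_app; auto.
    + apply (Hord K y B []); auto.
    + intros z [].
  - intros Hy. apply NoDup_remove_2 in Hnd. rewrite app_nil_r in Hnd. auto.
Qed.

Lemma closed_subctx_cunion K1 K2 : closed_subctx G K1 -> incl K2 G -> NoDup (dom K2) ->
  (forall H1 y B H2, K2 = H1 ++ (y, B) :: H2 -> incl (fv B) (dom K1 ++ dom H1)) ->
  closed_subctx G (cunion K1 K2).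
Proof.
  intros [Hincl1 [Hnd1 Hord1]] Hincl2 Hnd2 Hord2. split; [|split].
  - intros e He. apply in_cunion in He as [? | ?]; auto.
  - unfold cunion, dom. rewrite map_app. apply NoDup_app; auto using dom_filter_nodup.
    intros z Hz1 Hz2. apply in_map_iff in Hz1 as [[z1 C1] [? Hc1]], Hz2 as [[z2 C2] [? Hc2]].
    simpl in *; subst. apply filter_In in Hc2 as [Hc2 Hf].
    assert (C1 = C2) as <- by eauto using dom_nodup_functional, wf_dom_nodup.
    destruct (in_dec entry_eq_dec (z, C1) K1); [discriminate | contradiction].
  - intros H1 y B H2 E z Hz. unfold cunion in E.
    destruct (app_eq_app_cons _ _ _ _ _ E) as [[H2' E1] | [Q1 [-> E2]]]; [eapply Hord1; eauto|].
    destruct (filter_eq_app_cons _ _ _ _ _ E2) as [P1 [P2 [E3 <-]]].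
    apply in_dom_app. apply (Hord2 P1 y B P2 E3), in_app_or in Hz as [Hz | Hz]; auto.
    apply in_dom_inv in Hz as [C HC].
    destruct (in_dec entry_eq_dec (z, C) K1); [left; eapply in_dom; eauto|].
    right. eapply in_dom. apply filter_In. split; eauto.
    destruct (in_dec entry_eq_dec (z, C) K1); [contradiction | auto].
Qed.

Lemma closed_subctx_cunion_closed K1 K2 :
  closed_subctx G K1 -> closed_subctx G K2 -> closed_subctx G (cunion K1 K2).
Proof.
  intros HK1 (Hincl2 & Hnd2 & Hord2). apply closed_subctx_cunion; auto.
  intros. apply incl_appr. eapply Hord2; eauto.
Qed.

Lemma closed_subctx_fold_cunion l acc : closed_subctx G acc ->
  (forall K, In K l -> closed_subctx G K) -> closed_subctx G (fold_left cunion l acc).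
Proof.
  revert acc; induction l as [|K l IH]; simpl; intros; auto.
  apply IH; auto. apply closed_subctx_cunion_closed; auto.
Qed.

End ClosedSubcontexts.

Lemma fold_cunion_incl l acc K : In K l -> incl K (fold_left cunion l acc).
Proof.
  assert (Hacc : forall l acc, incl acc (fold_left cunion l acc)).
  { intros l'; induction l' as [|K' l' IH]; simpl; intros acc'; [apply incl_refl|].
    intros e He. apply IH, in_cunion; auto. }
  revert acc; induction l as [|K' l IH]; simpl; intros acc HK; [contradiction|].
  destruct HK as [-> | HK]; auto.
  intros e He. apply Hacc, in_cunion; auto.
Qed.

Section FVContext.
Variable G : ctx.
Hypothesis HG : wf G.

Definition declared_before (n : nat) (xs : list atom) : Prop :=
  forall x, In x xs -> exists G1 A G2, G = G1 ++ (x, A) :: G2 /\ length G1 < n.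

Lemma declared_before_dom xs : incl xs (dom G) -> declared_before (length G) xs.
Proof.
  intros Hxs x Hx. apply Hxs, in_dom_inv in Hx as [A HA].
  apply in_split in HA as [G1 [G2 EG]]. exists G1, A, G2. split; auto.
  rewrite EG, length_app. simpl. lia.
Qed.

(* The fuel of [fvctx] suffices because a type in [G] only mentions earlier variables. *)
Lemma entry_fv_declared_before n xs x A : declared_before (S n) xs ->
  In (x, A) (entries G xs) -> declared_before n (undup (fv A)).
Proof.
  intros Hxs Hx z Hz. apply in_entries in Hx as [Hx Hl]. apply lookup_in in Hl.
  destruct (Hxs x Hx) as [G1 [A' [G2 [EG Hlen]]]].
  assert (A' = A) as ->.
  { eapply dom_nodup_functional; [apply wf_dom_nodup, HG | rewrite EG; apply in_elt | exact Hl]. }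
  destruct (wf_entry_inv G1 x A G2) as [[i Hi] _]; [rewrite <- EG; exact HG|].
  apply in_undup, (proj1 (typing_fv_dom _ _ _ Hi)) in Hz.
  apply in_dom_inv in Hz as [C HC].
  apply in_split in HC as [K1 [K2 EG1]].
  exists K1, C, (K2 ++ (x, A) :: G2). split.
  - rewrite EG, EG1, <- app_assoc. reflexivity.
  - rewrite EG1, length_app in Hlen. simpl in Hlen. lia.
Qed.

Lemma fvctx_closed_subctx n xs : declared_before n xs -> NoDup xs ->
  closed_subctx G (fvctx n G xs) /\ incl xs (dom (fvctx n G xs)).
Proof.
  revert xs; induction n as [|n IH]; intros xs Hxs Hnd.
  - split; [apply closed_subctx_nil|]. intros x Hx. destruct (Hxs x Hx) as [? [? [? [_ ?]]]]. lia.
  - cbn [fvctx]. set (es := entries G xs).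
    set (sub A := fvctx n G (undup (fv A))).
    assert (Hsub : forall x A, In (x, A) es ->
      closed_subctx G (sub A) /\ incl (fv A) (dom (sub A))).
    { intros x A HA. destruct (IH (undup (fv A))) as [? Hdom];
        eauto using entry_fv_declared_before, undup_nodup.
      split; auto. intros z Hz. apply Hdom, in_undup, Hz. }
    set (P := fold_left cunion (map (fun e => sub (snd e)) es) []).
    split.
    + apply closed_subctx_cunion; auto.
      * apply closed_subctx_fold_cunion; auto using closed_subctx_nil.
        intros K HK. apply in_map_iff in HK as [[x A] [<- HA]]. apply (Hsub x A HA).
      * intros [x A] HA. apply in_entries in HA as [_ HA]. apply lookup_in; auto.
      * apply entries_nodup; auto.
      * intros H1 y B H2 E z Hz. apply in_or_app. left.
        assert (HyB : In (y, B) es) by (rewrite E; apply in_elt).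
        apply (proj2 (Hsub y B HyB)), in_dom_inv in Hz as [C HC].
        eapply in_dom, (fold_cunion_incl _ _ (sub B)); [apply in_map_iff; exists (y, B)|]; eauto.
    + intros x Hx. destruct (Hxs x Hx) as [G1 [A [G2 [EG _]]]].
      assert (HA : In (x, A) G) by (rewrite EG; apply in_elt).
      apply (in_dom _ x A), in_cunion. right. apply in_entries. split; auto.
      apply in_lookup; auto using wf_dom_nodup.
Qed.

End FVContext.

Theorem lemma3p5 : forall (G : ctx) (M A : term),
  typing G M A -> typing (FV G M A) M A.
Proof.
  intros G M A H.
  pose proof (typing_wf _ _ _ H) as HG.
  destruct (typing_fv_dom _ _ _ H) as [HM HA].
  set (xs := undup (fv M ++ fv A)).
  assert (Hxs : incl xs (dom G)) by (intros x Hx; apply in_undup, in_app_or in Hx as [? | ?]; auto).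
  destruct (fvctx_closed_subctx G HG (length G) xs) as [Hclosed Hdom];
    [apply declared_before_dom; auto | apply undup_nodup |].
  apply typing_strengthen with G; auto.
  - eapply wf_closed_subctx; eauto.
  - apply Hclosed.
  - intros z Hz. apply Hdom, in_undup, in_or_app; auto.
  - intros z Hz. apply Hdom, in_undup, in_or_app; auto.
Qed.
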